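(* Let $\mathcal X$ be a nonsingular plane curve of degree $r+1$ (with $r\ge2$) and genus $g$ over $\mathbf F_q$ with at least one $\mathbf F_q$-rational point. Let $U(\mathcal X)$ be its set of jumps. Then: (1) $|U(\mathcal X)|=R(2g-2)$, and this number equals $r^2/4$ if $r$ is even and $(r^2-1)/4$ if $r$ is odd. (2) $U(\mathcal X)=\{\alpha r+\beta: -1\le\alpha\le r-2,\ 0\le\beta\le r-1,\ \text{and } (2\beta+2\le\alpha \text{ or } \beta=r-1)\}\setminus\{2g-1\}$.
   Context: $\ell(A)=\dim_{\mathbf F_q}\mathcal L(A)$. For $i\ge1$, $\gamma_i=\min\{\deg A: A\ \mathbf F_q\text{-rational divisor},\ \ell(A)\ge i\}$. For such a plane curve it is known that $GS(\mathcal X)=\{\gamma_i\}$ is the numerical semigroup generated by $r$ and $r+1$, and that $g=r(r-1)/2$. Let $\mathbf N'=\{-1,0,1,\dots\}$. Define $\tilde\ell(-1)=0$ and $\tilde\ell(b)=\max\{i\ge1:\gamma_i\le b\}$ for $b\ge0$. For $-1\le N\le 2g-2$, let $R(N)=\min\{\tilde\ell(a)+\tilde\ell(b):a,b\in\mathbf N',\ a+b=N\}$, and set $R(-2):=0$. An integer $N$ with $-1\le N\le 2g-2$ is a jump of $\mathcal X$ if $R(N)>R(N-1)$; $U(\mathcal X)$ is the set of jumps. *)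

From mathcomp Require Import all_boot all_order all_algebra.
Set Implicit Arguments. Unset Strict Implicit. Unset Printing Implicit Defensive.
Import Order.TTheory GRing.Theory Num.Theory.

(* The numerical semigroup GS(X) = <r, r+1> (known for a nonsingular plane
   curve of degree r+1). *)
Definition inS (r n : nat) : bool :=
  has (fun a => has (fun b => a * r + b * r.+1 == n) (iota 0 n.+1)) (iota 0 n.+1).

(* The elements 0, r, ..., (i-1) r lie in the semigroup, so the i-th smallest
   element is <= i*r and appears in the listed range. *)
Definition gamma (r i : nat) : nat :=
  nth 0 [seq n <- iota 0 (i * r).+1 | inS r n] i.-1.

Definition genus (r : nat) : nat := r * (r - 1) %/ 2.

(* tilde ell(b) = max{ i >= 1 : gamma_i <= b } for b >= 0. Since gamma is
   strictly increasing with gamma_1 = 0, gamma_i >= i - 1, so every such i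
   is < b + 2. *)
Definition tl (r b : nat) : nat :=
  \max_(1 <= i < b.+2 | gamma r i <= b) i.

Definition tlz (r : nat) (b : int) : nat :=
  match b with Posz n => tl r n | Negz _ => 0 end.

(* R(N) = min{ tl a + tl b : a, b >= -1, a + b = N } for N >= -1; R(-2) = 0.
   Here a = k - 1 ranges over -1, ..., N+1. *)
Definition Rfun (r : nat) (N : int) : nat :=
  if (N <= -2)%R then 0%N
  else \big[minn/(tlz r (-1) + tlz r (N + 1))%N]_(0 <= k < absz (N + 3)%R)
         (tlz r (k%:Z - 1) + tlz r (N - (k%:Z - 1)))%N.

Definition is_jump (r : nat) (N : int) : bool :=
  [&& (-1 <= N)%R, (N <= (genus r)%:Z * 2 - 2)%R & (Rfun r (N - 1) < Rfun r N)%N].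

Definition jumps (r : nat) : seq int :=
  [seq N <- [seq (k%:Z - 1)%R | k <- iota 0 (2 * genus r)%N] | is_jump r N].

(* The semigroup <r, r+1> contains K * r + J (J < r) exactly when J <= K, so for K, J < r
   the counting function is l~(K * r + J) = 'C(K + 1, 2) + min(J, K) + 1.  In
   R(a * r + b) = min { l~(x) + l~(y) : x + y = a * r + b } the convexity of
   K |-> 'C(K + 1, 2) forces the quotients of x and y by r to be as balanced as the
   remainders allow; with h = floor(a/2) and u = ceil(a/2) this gives, for a <= r - 2,
     R(a * r + b) = 'C(h + 1, 2) + 'C(u + 1, 2) + min(b + 1, h) + [b = r - 1] + 1,
   the minimum being attained by explicit splittings (x = -1 included).  Hence R grows by
   at most one at each step, exactly when 2b + 2 <= a or b = r - 1; summing the increments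
   gives |U| = R(2g - 2), and 2g - 2 = (r - 2) * r + (r - 2) yields floor(r^2/4). *)

From mathcomp Require Import all_boot all_order all_algebra.
From mathcomp Require Import zify.
Import Order.TTheory GRing.Theory Num.Theory.

(** * The semigroup <r, r+1> and its counting function *)

Lemma inS_divmod r n : 0 < r -> inS r n = (n %% r <= n %/ r).
Proof.
move=> r_gt0; apply/hasP/idP.
- case=> a _ /hasP [b _ /eqP <-].
  have -> : a * r + b * r.+1 = (a + b) * r + b by rewrite mulnSr mulnDl addnA.
  rewrite modnMDl divnMDl //.
  exact: leq_trans (leq_mod b r) (leq_trans (leq_addl a b) (leq_addr _ _)).
- move=> le_mod_div; exists (n %/ r - n %% r).
    by rewrite mem_iota ltnS (leq_trans (leq_subr _ _)) ?leq_div.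
  apply/hasP; exists (n %% r); first by rewrite mem_iota ltnS leq_mod.
  by rewrite mulnSr mulnBl addnA subnK ?leq_mul2r ?le_mod_div ?orbT // -divn_eq.
Qed.

Lemma inS_block r K J : J < r -> inS r (K * r + J) = (J <= K).
Proof.
move=> ltJr; have r_gt0 : 0 < r by case: r ltJr.
by rewrite inS_divmod // modnMDl divnMDl // modn_small // divn_small // addn0.
Qed.

Definition sgcount (r n : nat) : nat := count (inS r) (iota 0 n.+1).

Lemma sgcountS r n : sgcount r n.+1 = sgcount r n + inS r n.+1.
Proof. by rewrite /sgcount -addn1 iotaD count_cat /= addn0. Qed.

Lemma leq_sgcount r m n : m <= n -> sgcount r m <= sgcount r n.
Proof.
by move=> le_mn; rewrite /sgcount -(subnKC le_mn) -addSn iotaD count_cat leq_addr.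
Qed.

Lemma sgcount_mul r i : 0 < r -> i <= sgcount r (i * r).
Proof.
move=> r_gt0; elim: i => // i IHi.
have E : i.+1 * r = (i * r + r.-1).+1 by rewrite mulSn; lia.
have := inS_block r i.+1 0 r_gt0; rewrite addn0 E => inS_mul.
rewrite sgcountS inS_mul addn1 ltnS.
exact: leq_trans IHi (leq_sgcount _ _ _ (leq_addr _ _)).
Qed.

Lemma sgcount_block r K J : K < r -> J < r ->
  sgcount r (K * r + J) = 'C(K.+1, 2) + minn J K + 1.
Proof.
have sgcount_next K' J' : J'.+1 < r ->
    sgcount r (K' * r + J'.+1) = sgcount r (K' * r + J') + (J' < K').
  by move=> ltJr; rewrite addnS sgcountS -addnS inS_block.
elim: K J => [|K IHK] J ltKr; elim: J => [//|J IHJ] ltJr.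
- by rewrite sgcount_next // IHJ ?(ltnW ltJr); lia.
- have r_gt0 : 0 < r by lia.
  have := inS_block r K.+1 0 r_gt0; rewrite !addn0.
  have E : K.+1 * r = (K * r + r.-1).+1 by rewrite mulSn; lia.
  rewrite E => inS_mul.
  rewrite sgcountS IHK ?inS_mul ?binS ?bin1 ?bin0; lia.
- by rewrite sgcount_next // IHJ ?(ltnW ltJr); lia.
Qed.

Lemma nth_filter_iota_leq (P : pred nat) M i b : i < count P (iota 0 M) ->
  (nth 0 (filter P (iota 0 M)) i <= b) = (i < count P (iota 0 b.+1)).
Proof.
move=> lt_i_count; have i_in : i < size (filter P (iota 0 M)) by rewrite size_filter.
have := mem_nth 0 i_in; rewrite mem_filter mem_iota add0n => /andP [_ lt_nth_M].
case: (leqP M b.+1) => [le_M_b | lt_b_M].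
  rewrite -ltnS (leq_trans lt_nth_M le_M_b); apply/esym/(leq_trans lt_i_count).
  by rewrite -(subnKC le_M_b) iotaD count_cat leq_addr.
move: i_in; rewrite -(subnKC (ltnW lt_b_M)) iotaD add0n filter_cat size_cat !size_filter.
rewrite nth_cat size_filter; case: ifP => [lt_i_pre _ | /negbT le_pre_i i_in].
  have : nth 0 (filter P (iota 0 b.+1)) i \in filter P (iota 0 b.+1).
    by apply: mem_nth; rewrite size_filter.
  by rewrite mem_filter mem_iota add0n ltnS => /and3P [_ _ ->].
set j := i - _; set s := filter P _.
have : nth 0 s j \in s by apply: mem_nth; rewrite size_filter /j ltn_subLR // leqNgt.
by rewrite mem_filter mem_iota ltnNge => /andP [_ /andP [/negbTE ->]].
Qed.

Lemma gamma_leq r i b : 0 < r -> 0 < i -> (gamma r i <= b) = (i <= sgcount r b).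
Proof.
move=> r_gt0 i_gt0; rewrite /gamma nth_filter_iota_leq prednK //.
exact: sgcount_mul.
Qed.

Lemma tl_sgcount r b : 0 < r -> tl r b = sgcount r b.
Proof.
move=> r_gt0; apply/eqP; rewrite eqn_leq; apply/andP; split.
  apply/bigmax_leqP_seq => i; rewrite mem_index_iota => /andP [i_gt0 _].
  by rewrite gamma_leq.
apply: (@leq_bigmax_seq nat _ _ (fun i => i) (sgcount r b)); last by rewrite gamma_leq.
by rewrite mem_index_iota ltnS /sgcount (leq_trans (count_size _ _)) ?size_iota.
Qed.

Lemma tlz_nat r n : 0 < r -> tlz r n%:Z = sgcount r n.
Proof. exact: tl_sgcount. Qed.

(** * The closed form of R *)

Lemma bin2S_mul2 k : 'C(k.+1, 2) * 2 = k.+1 * k.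
Proof. by rewrite bin2 /= -[RHS]odd_double_half oddM andNb add0n -muln2. Qed.

(* The least value of 'C(K.+1, 2) + 'C(K'.+1, 2) over K + K' = a. *)
Definition balanced (a : nat) : nat := a./2.+1 * uphalf a.

Lemma balancedE a : 'C(a./2.+1, 2) + 'C((uphalf a).+1, 2) = balanced a.
Proof.
have := bin2S_mul2 a./2; have := bin2S_mul2 (uphalf a).
rewrite /balanced uphalf_half; case: (odd a) => /=; lia.
Qed.

Lemma balancedS a : balanced a.+1 = balanced a + uphalf a.+1.
Proof. by rewrite /balanced /= mulnC mulnS addnC. Qed.

Lemma balanced_le a K K' : K + K' = a -> K <= a./2 ->
  balanced a + (a./2 - K) <= 'C(K.+1, 2) + 'C(K'.+1, 2).
Proof.
move=> <-; have := bin2S_mul2 K; have := bin2S_mul2 K'.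
rewrite /balanced uphalf_half; have := odd_double_half (K + K').
move: (odd _) (half _) => [] q; rewrite -muln2 => ? ? ? ?; nia.
Qed.

(* The closed form of R (a * r + b), valid for a <= r - 2 and b < r. *)
Definition Rclosed (r a b : nat) : nat :=
  balanced a + minn b.+1 a./2 + (b == r.-1) + 1.

Lemma divmod_block r K J : J < r -> (K * r + J) %/ r = K /\ (K * r + J) %% r = J.
Proof.
move=> lt_J_r; have r_gt0 : 0 < r by case: r lt_J_r.
by rewrite divnMDl // modnMDl divn_small // modn_small // addn0.
Qed.

Lemma divmod_block_inj r x y s t : x * r + s = y * r + t -> s < r -> t < r -> x = y /\ s = t.
Proof.
move=> E lt_s_r lt_t_r; have [dx mx] := divmod_block r x s lt_s_r.
by have [dy my] := divmod_block r y t lt_t_r; split; [rewrite -dx E dy | rewrite -mx E my].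
Qed.

Lemma Rclosed_le_blocks r a b K J K' J' :
  a <= r - 2 -> b < r -> J < r -> J' < r -> K <= K' ->
  (K + K' = a /\ J + J' = b) \/ ((K + K').+1 = a /\ J + J' = b + r) ->
  Rclosed r a b <= 'C(K.+1, 2) + minn J K + 1 + ('C(K'.+1, 2) + minn J' K' + 1).
Proof.
move=> le_a_r lt_b_r lt_J_r lt_J'_r le_K_K' [[sumK sumJ] | [sumK sumJ]]; last subst a.
  by have := balanced_le a K K' sumK; rewrite /Rclosed; lia.
(* With a carry both remainders exceed b, so min J K + min J' K' >= K + min b.+1 K'. *)
have := balanced_le (K + K') K K' erefl; rewrite /Rclosed balancedS; lia.
Qed.

Lemma Rclosed_le_succ r a b : 2 <= r -> a <= r - 2 -> b < r ->
  Rclosed r a b <= sgcount r (a * r + b).+1.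
Proof.
move=> le2r le_a_r lt_b_r; have := balanced_le a 0 a (add0n a) (leq0n _).
rewrite bin_small // subn0 add0n /Rclosed => le_bal.
have [lt_b1_r | ge_b1_r] := ltnP b.+1 r.
  by rewrite -addnS sgcount_block //; lia.
have -> : (a * r + b).+1 = a.+1 * r + 0 by rewrite mulSn; lia.
by rewrite sgcount_block ?(binS a.+1 1) ?bin1; lia.
Qed.

Lemma Rclosed_le_split r a b i : a <= r - 2 -> b < r -> i <= a * r + b ->
  Rclosed r a b <= sgcount r i + sgcount r (a * r + b - i).
Proof.
move=> le_a_r lt_b_r; set n := a * r + b.
wlog le_K_K' : i / i %/ r <= (n - i) %/ r => [sym | le_i_n].
  move=> le_i_n; have [le_K_K' | /ltnW le_K'_K] := leqP (i %/ r) ((n - i) %/ r).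
    exact: sym le_K_K' le_i_n.
  by have := sym (n - i); rewrite subKn // addnC; apply; rewrite ?leq_subr.
have r_gt0 : 0 < r by lia.
have := divn_eq i r; have := divn_eq (n - i) r.
have := ltn_pmod i r_gt0; have := ltn_pmod (n - i) r_gt0.
move: (i %/ r) (i %% r) ((n - i) %/ r) ((n - i) %% r) le_K_K'.
move=> K J K' J' le_K_K' lt_J'_r lt_J_r def_ni def_i.
have E : (K + K') * r + (J + J') = a * r + b by rewrite mulnDl; lia.
have carry : (K + K' = a /\ J + J' = b) \/ ((K + K').+1 = a /\ J + J' = b + r).
  have [lt_JJ_r | ge_JJ_r] := ltnP (J + J') r.
    by left; exact: divmod_block_inj E lt_JJ_r lt_b_r.
  right; have E' : (K + K').+1 * r + (J + J' - r) = a * r + b by rewrite mulSn; lia.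
  have [] := divmod_block_inj _ _ _ _ _ E' _ lt_b_r; lia.
rewrite -/n def_ni def_i !sgcount_block; try lia.
exact: Rclosed_le_blocks.
Qed.

Lemma Rclosed_attained r a b : 2 <= r -> a <= r - 2 -> b < r ->
  sgcount r (a * r + b).+1 = Rclosed r a b \/
  exists2 i, i <= a * r + b & sgcount r i + sgcount r (a * r + b - i) = Rclosed r a b.
Proof.
move=> le2r le_a_r lt_b_r; rewrite /Rclosed -balancedE.
have def_a : a = a./2 + uphalf a by rewrite uphalf_half addnCA addnn odd_double_half.
set h := a./2 in def_a *; set u := uphalf a in def_a *.
have le_u_h1 : u <= h.+1 by rewrite /u /h uphalf_half; case: (odd a).
have {1 2 3}-> : a * r = h * r + u * r by rewrite {1}def_a mulnDl.
have [/eqP eq_b | ne_b] := boolP (b == r.-1).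
  right; exists (h * r + r.-1); first by lia.
  have -> : h * r + u * r + b - (h * r + r.-1) = u * r + 0 by lia.
  by rewrite !sgcount_block; lia.
have [lt_b_h | le_h_b] := ltnP b h.
  right; exists (h * r + b); first by lia.
  have -> : h * r + u * r + b - (h * r + b) = u * r + 0 by lia.
  by rewrite !sgcount_block; lia.
have [u0 | u_gt0] := posnP u.
  left; have h0 : h = 0 by lia.
  have -> : (h * r + u * r + b).+1 = 0 * r + b.+1 by rewrite h0 u0.
  by rewrite sgcount_block ?h0 ?u0 ?bin_small //; lia.
have := leq_pmull r u_gt0; right; exists (h * r + r.-1); first by lia.
have -> : h * r + u * r + b - (h * r + r.-1) = u.-1 * r + b.+1.
  by rewrite -{1}(prednK u_gt0) mulSn; lia.
by rewrite !sgcount_block ?(prednK u_gt0) ?(binS u 1) ?bin1; lia.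
Qed.

Lemma tlz_split r n k : 0 < r ->
  tlz r (k%:Z - 1) + tlz r (n%:Z - (k%:Z - 1)) =
  if k is i.+1 then sgcount r i + (if i <= n then sgcount r (n - i) else 0)
  else sgcount r n.+1.
Proof.
move=> r_gt0; case: k => [|i].
  have -> : (n%:Z - (0%:Z - 1) = n.+1%:Z)%R by lia.
  by rewrite tlz_nat.
have -> : (i.+1%:Z - 1 = i%:Z)%R by lia.
rewrite tlz_nat //; case: leqP => [le_i_n | lt_n_i].
  have -> : (n%:Z - i%:Z = (n - i)%:Z)%R by lia.
  by rewrite tlz_nat.
have -> : (n%:Z - i%:Z = Negz (i - n).-1)%R by lia.
by rewrite addn0.
Qed.

Lemma Rfun_nat r n : Rfun r n%:Z =
  \big[Order.min/tlz r (-1) + tlz r (n%:Z + 1)]_(0 <= k < n.+3)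
    (tlz r (k%:Z - 1) + tlz r (n%:Z - (k%:Z - 1))).
Proof. by rewrite /Rfun -minEnat; congr bigop; rewrite /index_iota; congr iota; lia. Qed.

Lemma Rfun_divmod r a b : 2 <= r -> a <= r - 2 -> b < r ->
  Rfun r (a * r + b)%:Z = Rclosed r a b.
Proof.
move=> le2r le_a_r lt_b_r; have r_gt0 : 0 < r by lia.
have head : tlz r (-1) + tlz r ((a * r + b)%:Z + 1) = sgcount r (a * r + b).+1.
  by have := tlz_split r (a * r + b) 0 r_gt0.
rewrite Rfun_nat head; apply/eqP; rewrite eqn_leq -!leEnat; apply/andP; split.
  have [<- | [i le_i_n <-]] := Rclosed_attained r a b le2r le_a_r lt_b_r.
    by apply: (bigmin_inf_seq _ 0) => //; rewrite ?mem_index_iota ?tlz_split.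
  apply: (bigmin_inf_seq _ i.+1) => //; first by rewrite mem_index_iota; lia.
  by rewrite tlz_split // le_i_n.
apply: le_bigmin => [|k _]; first exact: Rclosed_le_succ.
rewrite tlz_split //; case: k => [|i]; first exact: Rclosed_le_succ.
case: leqP => [le_i_n | lt_n_i]; first exact: Rclosed_le_split.
rewrite addn0; apply: leq_trans (Rclosed_le_succ r a b le2r le_a_r lt_b_r) _.
exact: leq_sgcount.
Qed.

(** * Jumps *)

Definition jump_cond (r a b : nat) : bool := (2 * b + 2 <= a) || (b == r.-1).

Lemma Rclosed_succ r a b : a < r -> b.+1 < r ->
  Rclosed r a b.+1 = Rclosed r a b + jump_cond r a b.+1.
Proof. by move=> lt_a_r lt_b1_r; rewrite /Rclosed /jump_cond; lia. Qed.

Lemma Rclosed_carry r a : 2 <= r -> a < r ->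
  Rclosed r a.+1 0 = Rclosed r a r.-1 + jump_cond r a.+1 0.
Proof.
by move=> le2r lt_a_r; rewrite /Rclosed /jump_cond balancedS; lia.
Qed.

Lemma Rfun_succ r n : 2 <= r -> n.+1 < r.-1 * r ->
  Rfun r n.+1%:Z = Rfun r n%:Z + jump_cond r (n.+1 %/ r) (n.+1 %% r).
Proof.
move=> le2r lt_n1; have r_gt0 : 0 < r by lia.
have lt_a : n %/ r < r.-1 by rewrite ltn_divLR //; lia.
have := divn_eq n r; have := ltn_pmod n r_gt0.
move: (n %/ r) (n %% r) lt_a => a b lt_a lt_b_r def_n.
have [lt_b1_r | ge_b1_r] := ltnP b.+1 r.
  have def_n1 : n.+1 = a * r + b.+1 by rewrite def_n addnS.
  rewrite def_n1 [in Rfun r n%:Z]def_n; have [-> ->] := divmod_block r a b.+1 lt_b1_r.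
  by rewrite !Rfun_divmod ?Rclosed_succ //; lia.
have def_n1 : n.+1 = a.+1 * r + 0 by rewrite def_n mulSn; lia.
have lt_a1 : a.+1 < r.-1.
  by rewrite -ltn_divLR // def_n1 in lt_n1; have [<-] := divmod_block r a.+1 0 r_gt0.
rewrite def_n1 [in Rfun r n%:Z]def_n; have [-> ->] := divmod_block r a.+1 0 r_gt0.
have -> : b = r.-1 by lia.
by rewrite !Rfun_divmod ?Rclosed_carry //; lia.
Qed.

Lemma genus_double r : genus r * 2 = r.-1 * r.
Proof.
rewrite /genus subn1 [r * _]mulnC divnK // dvdn2 oddM.
by case: r => // r; rewrite /= andbN.
Qed.

Lemma genus_double_sub r k : 2 <= r -> k <= 2 ->
  ((genus r)%:Z * 2 - k%:Z)%R = (r.-1 * r - k)%N.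
Proof.
move=> le2r le_k2; have := genus_double r.
have : 2 <= r.-1 * r by rewrite (leq_trans le2r) // leq_pmull // ltn_predRL.
lia.
Qed.

Lemma Rfun_le_m2 r N : (N <= -2)%R -> Rfun r N = 0.
Proof. by rewrite /Rfun => ->. Qed.

Lemma Rfun_m1 r : 0 < r -> Rfun r (-1) = 1.
Proof. by move=> r_gt0; rewrite /Rfun /= !big_cons big_nil /= !tl_sgcount. Qed.

Lemma Rfun0 r : 2 <= r -> Rfun r 0 = 1.
Proof.
move=> le2r; have := Rfun_divmod r 0 0 le2r (leq0n _) (ltnW le2r).
by rewrite mul0n add0n => ->; case: r le2r => [|[|r]].
Qed.

Lemma is_jump_m1 r : 2 <= r -> is_jump r (-1).
Proof.
move=> le2r; rewrite /is_jump genus_double_sub // Rfun_m1 ?Rfun_le_m2 //; lia.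
Qed.

Lemma is_jump0 r : 2 <= r -> is_jump r 0 = false.
Proof.
by move=> le2r; rewrite /is_jump (_ : (0 - 1 = -1)%R) // Rfun_m1 ?Rfun0 ?(ltnW le2r) //= !andbF.
Qed.

Lemma is_jump_succ r n : 2 <= r ->
  is_jump r n.+1%:Z = (n.+1 <= r.-1 * r - 2) && jump_cond r (n.+1 %/ r) (n.+1 %% r).
Proof.
move=> le2r; rewrite /is_jump genus_double_sub // lez_nat.
rewrite (_ : (-1 <= n.+1%:Z)%R) ?andTb; last by lia.
case: (leqP n.+1 (r.-1 * r - 2)) => // le_n1.
rewrite (_ : (n.+1%:Z - 1 = n%:Z)%R); last by lia.
rewrite Rfun_succ //; last by lia.
by case: jump_cond; rewrite ?addn1 ?addn0 ?ltnSn ?ltnn; lia.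
Qed.

Lemma Rfun_telescope r m : 2 <= r -> m < r.-1 * r ->
  Rfun r (m%:Z - 1) = Rfun r (m%:Z - 2) + is_jump r (m%:Z - 1).
Proof.
move=> le2r lt_m; case: m lt_m => [|[|n]] lt_m.
- by rewrite (_ : (0%:Z - 1 = -1)%R) // is_jump_m1 // Rfun_m1 ?Rfun_le_m2 //; lia.
- rewrite (_ : (1%:Z - 1 = 0)%R) // (_ : (1%:Z - 2 = -1)%R) //.
  by rewrite is_jump0 // Rfun_m1 ?Rfun0 //; lia.
rewrite (_ : (n.+2%:Z - 1 = n.+1%:Z)%R); last by lia.
rewrite (_ : (n.+2%:Z - 2 = n%:Z)%R); last by lia.
by rewrite is_jump_succ // Rfun_succ //; [case: leqP => //; lia | lia].
Qed.

Lemma count_is_jump r m : 2 <= r -> m <= r.-1 * r ->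
  count (is_jump r) [seq (k%:Z - 1)%R | k <- iota 0 m] = Rfun r (m%:Z - 2).
Proof.
move=> le2r; elim: m => [_ | m IHm lt_m]; first by rewrite Rfun_le_m2.
rewrite -addn1 iotaD map_cat count_cat IHm ?(ltnW lt_m) //= addn0 add0n.
by rewrite -Rfun_telescope // (_ : ((m + 1)%:Z - 2 = m%:Z - 1)%R) //; lia.
Qed.

Lemma Rclosed_top r : 2 <= r ->
  Rclosed r (r - 2) (r - 2) = if odd r then (r ^ 2 - 1) %/ 4 else r ^ 2 %/ 4.
Proof.
move=> le2r; rewrite /Rclosed /balanced; have := odd_double_half r.
set m := r./2; case: (odd r) => /= def_r.
  have -> : r ^ 2 - 1 = m * m.+1 * 4 by rewrite -def_r; nia.
  have -> : (r - 2)./2 = m.-1 by lia.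
  have -> : uphalf (r - 2) = m by lia.
  by rewrite mulnK //; nia.
have -> : r ^ 2 = m * m * 4 by rewrite -def_r; nia.
have -> : (r - 2)./2 = m.-1 by lia.
have -> : uphalf (r - 2) = m.-1 by lia.
by rewrite mulnK //; nia.
Qed.

Lemma is_jumpP r N : 2 <= r ->
  is_jump r N <-> N = (-1)%R \/ exists n, N = Posz n.+1 /\
    (n.+1 <= r.-1 * r - 2) && jump_cond r (n.+1 %/ r) (n.+1 %% r).
Proof.
move=> le2r; case: N => [[|n] | [|k]].
- by rewrite is_jump0 //; split=> // [[// | [n []]]].
- rewrite is_jump_succ //; split=> [jn | [// | [m [[<-]]]]]; last by [].
  by right; exists n.
- by rewrite is_jump_m1 //; split=> // _; left.
- rewrite /is_jump; split=> [/andP [] | [// | [n []]]]; lia.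
Qed.

Lemma jump_paramsP r N : 2 <= r ->
  ((exists (alpha beta : int),
      (-1 <= alpha)%R /\ (alpha <= r%:Z - 2)%R /\ (0 <= beta)%R /\ (beta <= r%:Z - 1)%R /\
      ((2 * beta + 2 <= alpha)%R \/ beta = (r%:Z - 1)%R) /\ N = (alpha * r%:Z + beta)%R)
   /\ N <> ((genus r)%:Z * 2 - 1)%R) <->
  N = (-1)%R \/ exists n, N = Posz n.+1 /\
    (n.+1 <= r.-1 * r - 2) && jump_cond r (n.+1 %/ r) (n.+1 %% r).
Proof.
move=> le2r; have r_gt0 : 0 < r by lia.
have top : (r - 2) * r + r = r.-1 * r by rewrite addnC -mulSn; congr (_ * _); lia.
rewrite genus_double_sub //; split.
  case=> [[al [be [ge_al [le_al [ge_be [le_be [cond ->]]]]]]] ne_top].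
  case: al ge_al le_al cond ne_top => [a | [|k]] ge_al le_al cond ne_top; last by [].
    case: be ge_be le_be cond ne_top => [b | //] _ le_be cond ne_top.
    rewrite -PoszM -PoszD in ne_top *; right.
    have le_ar : a * r <= (r - 2) * r by rewrite leq_mul2r; apply/orP; right; lia.
    have pos : 0 < a * r + b.
      have [a0 | a_gt0] := posnP a; last by rewrite ltn_addr // muln_gt0 a_gt0.
      by move: cond; rewrite a0; lia.
    exists (a * r + b).-1; rewrite prednK //; split=> //.
    have [-> ->] := divmod_block r a b ltac:(lia).
    by rewrite /jump_cond; lia.
  by left; case: cond; lia.
case=> [-> | [n [-> /andP [le_n1 jn]]]].
  split; last by lia.
  by exists (-1)%R, (r%:Z - 1)%R; do !split; lia.
split; last by lia.
have lt_a : n.+1 %/ r < r.-1 by rewrite ltn_divLR //; lia.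
exists (Posz (n.+1 %/ r)), (Posz (n.+1 %% r)).
have := divn_eq n.+1 r; have := ltn_pmod n.+1 r_gt0; move: jn lt_a; rewrite /jump_cond.
move: (n.+1 %/ r) (n.+1 %% r) => a b jn lt_a lt_b ->.
by do !split; lia.
Qed.

Theorem lemma3p16 (r : nat) (hr : (2 <= r)%N) :
  (size (jumps r) = Rfun r ((genus r)%:Z * 2 - 2)%R /\
   Rfun r ((genus r)%:Z * 2 - 2)%R = (if odd r then (r ^ 2 - 1) %/ 4 else r ^ 2 %/ 4)%N)
  /\
  (forall N : int,
     is_jump r N <->
     ((exists (alpha beta : int),
         (-1 <= alpha)%R /\ (alpha <= r%:Z - 2)%R /\ (0 <= beta)%R /\ (beta <= r%:Z - 1)%R /\
             ((2 * beta + 2 <= alpha)%R \/ beta = (r%:Z - 1)%R) /\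
             N = (alpha * r%:Z + beta)%R)
      /\ N <> ((genus r)%:Z * 2 - 1)%R)).
Proof.
split; last first.
  by move=> N; apply: iff_trans (is_jumpP r N hr) (iff_sym (jump_paramsP r N hr)).
have two_g : 2 * genus r = r.-1 * r by rewrite mulnC genus_double.
have top : r.-1 * r - 2 = (r - 2) * r + (r - 2).
  by rewrite -[r.-1]prednK -?subn2 ?mulSn; lia.
have R_top : Rfun r ((genus r)%:Z * 2 - 2)%R = Rclosed r (r - 2) (r - 2).
  by rewrite genus_double_sub // top Rfun_divmod //; lia.
rewrite R_top; split; last exact: Rclosed_top.
rewrite /jumps size_filter two_g count_is_jump // -R_top.
by congr Rfun; have := genus_double r; lia.
Qed.
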